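(* Every lattice $L$ is embeddable as a lattice in a lattice $L'$ such that $\mathrm{id}(L')$ is embeddable as a lattice in $L'$. Likewise, every upper semilattice $S$ is embeddable as an upper semilattice in an upper semilattice $S'$ such that $\mathrm{id}(S')$ is embeddable as an upper semilattice in $S'$; and every poset $P$ is embeddable as a poset in a poset $P'$ such that $\mathrm{id}(P')$ is embeddable as a poset in $P'$.
   Context: For a poset $P$, an ideal of $P$ is an upward directed downset of $P$ (a downset $d$ satisfies $x\le y\in d\Rightarrow x\in d$; upward directed means every two elements of the set have a common upper bound in the set). $\mathrm{id}(P)$ denotes the set of all nonempty ideals of $P$, ordered by inclusion. For $L$ a lattice, $\mathrm{id}(L)$ is a lattice (meet is intersection, join is the ideal generated by the union); for $S$ an upper semilattice, $\mathrm{id}(S)$ is an upper semilattice under the same join. *)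

From HB Require Import structures.
From mathcomp Require Import all_boot all_order.
Set Implicit Arguments. Unset Strict Implicit. Unset Printing Implicit Defensive.
Import Order.Theory.
Local Open Scope order_scope.

Section Ideals.
Context {d : Order.disp_t} {T : porderType d}.

Definition is_downset (A : T -> Prop) : Prop :=
  forall x y : T, x <= y -> A y -> A x.

Definition is_up_directed (A : T -> Prop) : Prop :=
  forall x y : T, A x -> A y -> exists2 z, A z & (x <= z) && (y <= z).

Definition is_ideal (A : T -> Prop) : Prop :=
  [/\ exists x, A x, is_downset A & is_up_directed A].

Definition same_set (A B : T -> Prop) : Prop := forall x, A x <-> B x.

Definition subset (A B : T -> Prop) : Prop := forall x, A x -> B x.

Definition ideal_meet (A B : T -> Prop) : T -> Prop := fun x => A x /\ B x.

Definition ideal_join (A B : T -> Prop) : T -> Prop :=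
  fun x => forall C : T -> Prop, is_ideal C ->
    (forall y, A y -> C y) -> (forall y, B y -> C y) -> C x.

End Ideals.

Definition lattice_embedding {d d'} {L : latticeType d} {L' : latticeType d'}
  (f : L -> L') : Prop :=
  [/\ injective f,
      forall x y, f (x `&` y) = f x `&` f y &
      forall x y, f (x `|` y) = f x `|` f y].

Definition semilattice_embedding {d d'} {S : joinSemilatticeType d}
  {S' : joinSemilatticeType d'} (f : S -> S') : Prop :=
  injective f /\ forall x y, f (x `|` y) = f x `|` f y.

Definition poset_embedding {d d'} {P : porderType d} {P' : porderType d'}
  (f : P -> P') : Prop :=
  forall x y, (f x <= f y) = (x <= y).

(* Embeddings of id(T) into T, given as maps on subsets which must be
   well defined on ideals (respect extensional equality). *)
Definition ideal_map_wd {d} {T : porderType d} (g : (T -> Prop) -> T) : Prop :=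
  forall A B, is_ideal A -> is_ideal B -> same_set A B -> g A = g B.

Definition ideals_lattice_embedding {d} {L : latticeType d}
  (g : (L -> Prop) -> L) : Prop :=
  [/\ ideal_map_wd g,
      (forall A B, is_ideal A -> is_ideal B -> g A = g B -> same_set A B),
      (forall A B, is_ideal A -> is_ideal B ->
          g (ideal_meet A B) = g A `&` g B) &
      (forall A B, is_ideal A -> is_ideal B ->
          g (ideal_join A B) = g A `|` g B)].

Definition ideals_semilattice_embedding {d} {S : joinSemilatticeType d}
  (g : (S -> Prop) -> S) : Prop :=
  [/\ ideal_map_wd g,
      (forall A B, is_ideal A -> is_ideal B -> g A = g B -> same_set A B) &
      (forall A B, is_ideal A -> is_ideal B ->
          g (ideal_join A B) = g A `|` g B)].

Definition ideals_poset_embedding {d} {P : porderType d}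
  (g : (P -> Prop) -> P) : Prop :=
  forall A B, is_ideal A -> is_ideal B -> (g A <= g B <-> subset A B).

(* Let P' be the ordinal sum ... + id(id(P)) + id(P) + P of the iterated ideal
   posets of P, each level lying entirely below the previous one.  Every ideal I
   of P' meets a least level k and contains all deeper levels, so I is determined
   by its trace J on level k, an ideal of level k, i.e. an element of level k + 1;
   sending I to J embeds id(P') into P'.  When P is a (semi)lattice so is every
   level, hence so is P' (elements of distinct levels are comparable), and the
   image of the embedding, which consists of the elements of positive level, is
   closed under its joins and meets. *)

From HB Require Import structures.
From mathcomp Require Import all_boot all_order boolp.
Set Implicit Arguments. Unset Strict Implicit. Unset Printing Implicit Defensive.
Import Order.Theory.
Local Open Scope order_scope.

(* Prop-valued orders, so that the ideal construction can be iterated by a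
   Fixpoint without decidability requirements. *)
Record poset := Poset {
  carrier :> Type;
  ple : carrier -> carrier -> Prop;
  ple_refl : forall x, ple x x;
  ple_trans : forall x y z, ple x y -> ple y z -> ple x z;
  ple_anti : forall x y, ple x y -> ple y x -> x = y }.
Arguments ple {_}.

Definition is_pideal (P : poset) (A : P -> Prop) :=
  [/\ exists x, A x, forall x y, ple x y -> A y -> A x &
      forall x y, A x -> A y -> exists z, [/\ A z, ple x z & ple y z]].

Definition pideal (P : poset) := {A : P -> Prop | is_pideal A}.

Lemma pideal_ext P (A B : pideal P) : (forall x, sval A x <-> sval B x) -> A = B.
Proof.
case: A B => [A hA] [B hB] /= AB.
have eAB : A = B by apply: funext => x; apply: propext.
by subst B; congr exist; exact: Prop_irrelevance.
Qed.

Definition ideal_poset (P : poset) : poset.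
Proof.
refine (@Poset (pideal P) (fun A B => forall x, sval A x -> sval B x) _ _ _).
- by [].
- by move=> A B C AB BC x /AB /BC.
- by move=> A B AB BA; apply: pideal_ext => x; split; [apply: AB | apply: BA].
Defined.

Fixpoint tower (P : poset) (k : nat) : poset :=
  if k is k.+1 then ideal_poset (tower P k) else P.

Section TowerSum.
Variable P : poset.

Definition tsum := {k : nat & tower P k}.

(* Deeper levels lie below: level 0, the poset P itself, is on top. *)
Definition sum_le (s t : tsum) : Prop :=
  match s, t with existT k x, existT k' y =>
    match eq_comparable k k' with
    | left e => ple (eq_rect k (tower P) x k' e) y
    | right _ => (k' < k)%N
    end
  end.

Lemma sum_le_same k (x y : tower P k) :
  sum_le (existT _ k x) (existT _ k y) <-> ple x y.
Proof.
rewrite /sum_le; case: eq_comparable => [e|/(_ erefl)[]].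
by rewrite (eq_irrelevance e erefl).
Qed.

Lemma sum_le_diff k k' (x : tower P k) (y : tower P k') : k != k' ->
  sum_le (existT _ k x) (existT _ k' y) <-> (k' < k)%N.
Proof. by move=> ne; rewrite /sum_le; case: eq_comparable => // e; rewrite e eqxx in ne. Qed.

Lemma sum_le_level s t : sum_le s t -> (projT1 t <= projT1 s)%N.
Proof.
case: s t => [k x] [k' y] /=; have [e _|ne] := eqVneq k k'; first by rewrite e.
by move/(sum_le_diff _ _ ne)/ltnW.
Qed.

Lemma sum_le_deeper k k' (x : tower P k) (y : tower P k') : (k' < k)%N ->
  sum_le (existT _ k x) (existT _ k' y).
Proof. by move=> lt; apply/sum_le_diff => //; rewrite eq_sym ltn_eqF. Qed.

Lemma sum_le_refl s : sum_le s s.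
Proof. by case: s => k x; apply/sum_le_same/ple_refl. Qed.

Lemma sum_le_trans s t u : sum_le s t -> sum_le t u -> sum_le s u.
Proof.
case: s t u => [k x] [k' y] [k'' z] st tu.
have /= lk := sum_le_level st; have /= lk' := sum_le_level tu.
have [ekk'|nkk'] := eqVneq k k'; last first.
  apply: sum_le_deeper; apply: leq_ltn_trans lk' _.
  by move/(sum_le_diff _ _ nkk'): st.
subst k'; have [ekk''|nkk''] := eqVneq k k''; last first.
  by apply: sum_le_deeper; rewrite ltn_neqAle eq_sym nkk'' lk'.
subst k''; move/sum_le_same: st; move/sum_le_same: tu => tu st.
exact/sum_le_same/(ple_trans st tu).
Qed.

Lemma sum_le_anti s t : sum_le s t -> sum_le t s -> s = t.
Proof.
case: s t => [k x] [k' y] st ts.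
have ekk' : k = k' by apply/eqP; rewrite eqn_leq (sum_le_level st) (sum_le_level ts).
subst k'; move/sum_le_same: st; move/sum_le_same: ts => ts st.
by rewrite (ple_anti st ts).
Qed.

Lemma level_inj k : injective (existT (tower P) k).
Proof.
move=> x y exy; apply: ple_anti; apply/sum_le_same.
- by rewrite -exy; apply: sum_le_refl.
- by rewrite exy; apply: sum_le_refl.
Qed.

Definition sum_poset : poset := Poset sum_le_refl sum_le_trans sum_le_anti.

Definition lift_ideal k (A : tower P k -> Prop) : tsum -> Prop :=
  fun s => exists2 a, A a & sum_le s (existT _ k a).

Lemma is_pideal_lift k (A : tower P k -> Prop) :
  is_pideal A -> is_pideal (P := sum_poset) (lift_ideal A).
Proof.
case=> [[a Aa] downA dirA]; split.
- by exists (existT _ k a), a => //; apply: sum_le_refl.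
- by move=> s t st [b Ab tb]; exists b => //; exact: sum_le_trans st tb.
- move=> s t [a1 A1 s1] [a2 A2 t2]; have [c [Ac a1c a2c]] := dirA _ _ A1 A2.
  exists (existT _ k c); split.
  + by exists c => //; apply: sum_le_refl.
  + by apply: sum_le_trans s1 _; apply/sum_le_same.
  + by apply: sum_le_trans t2 _; apply/sum_le_same.
Qed.

Definition meets_level (I : tsum -> Prop) (n : nat) : bool :=
  `[< exists x : tower P n, I (existT (tower P) n x) >].

Definition top_level (I : tsum -> Prop) : nat :=
  if pselect (exists n, meets_level I n) is left h then ex_minn h else 0.

Lemma top_levelP (I : tsum -> Prop) : (exists s, I s) ->
  meets_level I (top_level I) /\ forall m, meets_level I m -> (top_level I <= m)%N.
Proof.
case=> -[n x] Ix; rewrite /top_level; case: pselect => [h|[]]; last first.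
  by exists n; apply/asboolP; exists x.
by case: ex_minnP.
Qed.

Definition top_block (I : tsum -> Prop) : tower P (top_level I) -> Prop :=
  fun x => I (existT (tower P) _ x).
Arguments top_block : clear implicits.

Lemma is_pideal_top_block (I : tsum -> Prop) :
  is_pideal (P := sum_poset) I -> is_pideal (top_block I).
Proof.
move=> [neI downI dirI]; have [/asboolP[a Ia] minI] := top_levelP neI; split.
- by exists a.
- by move=> x y /sum_le_same xy; apply: downI.
- move=> x y Ix Iy; have [[m z] [Iz xz yz]] := dirI _ _ Ix Iy.
  have le_m : (top_level I <= m)%N by apply: minI; apply/asboolP; exists z.
  have em : m = top_level I.
    by apply/eqP; rewrite eqn_leq le_m (sum_le_level xz).
  by subst m; exists z; split=> //; apply/sum_le_same.
Qed.

Lemma lift_top_block (I : tsum -> Prop) : is_pideal (P := sum_poset) I ->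
  forall s, I s <-> lift_ideal (top_block I) s.
Proof.
move=> [neI downI _]; have [/asboolP[a Ia] minI] := top_levelP neI.
split=> [Is|[b Ib sb]]; last exact: downI sb Ib.
case: s Is => m x Ix.
have le_m : (top_level I <= m)%N by apply: minI; apply/asboolP; exists x.
have [em|ne] := eqVneq m (top_level I).
  by subst m; exists x => //; apply: sum_le_refl.
by exists a => //; apply: sum_le_deeper; rewrite ltn_neqAle eq_sym ne.
Qed.

Lemma lift_ideal_subset ka kb (A : pideal (tower P ka)) (B : pideal (tower P kb)) :
  (forall s, lift_ideal (sval A) s -> lift_ideal (sval B) s) <->
  sum_le (existT (tower P) ka.+1 A) (existT (tower P) kb.+1 B).
Proof.
case: A B => [A hA] [B hB]; have [[a Aa] _ _] := hA; have [[b Bb] downB _] := hB.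
have lift_self k (C : tower P k -> Prop) c : C c -> lift_ideal C (existT _ k c).
  by move=> Cc; exists c => //; apply: sum_le_refl.
split=> [AB | le_AB s [a' Aa' sa']].
- have /AB[b' _ /sum_le_level le_kb] := lift_self _ _ _ Aa.
  have [e|ne] := eqVneq ka kb; last first.
    by apply: sum_le_deeper; rewrite ltnS ltn_neqAle eq_sym ne le_kb.
  subst kb; apply/sum_le_same => x Ax /=.
  by have /AB[y By /sum_le_same xy] := lift_self _ _ _ Ax; apply: downB xy By.
- have [e|ne] := eqVneq ka kb; last first.
    have neS : ka.+1 != kb.+1 by rewrite eqSS.
    have lt_kb : (kb < ka)%N by rewrite -ltnS; exact: (sum_le_diff _ _ neS).1 le_AB.
    by exists b => //; apply: sum_le_trans sa' _; apply: sum_le_deeper.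
  by subst kb; move/sum_le_same: le_AB => AB; exists a' => //; apply: AB.
Qed.

Definition code_of (I : tsum -> Prop) (hI : is_pideal (P := sum_poset) I) : tsum :=
  existT (tower P) (top_level I).+1
    (exist _ (top_block I) (is_pideal_top_block hI) : pideal _).

(* [s0] is a junk value for predicates that are not ideals. *)
Definition ideal_code (s0 : tsum) (I : tsum -> Prop) : tsum :=
  if pselect (is_pideal (P := sum_poset) I) is left hI then code_of hI else s0.

Lemma ideal_codeE s0 (I : tsum -> Prop) (hI : is_pideal (P := sum_poset) I) :
  ideal_code s0 I = code_of hI.
Proof. by rewrite /ideal_code; case: pselect => // h; congr code_of; exact: Prop_irrelevance. Qed.

Lemma ideal_code_le s0 (A B : tsum -> Prop) :
  is_pideal (P := sum_poset) A -> is_pideal (P := sum_poset) B ->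
  sum_le (ideal_code s0 A) (ideal_code s0 B) <-> (forall s, A s -> B s).
Proof.
move=> hA hB; rewrite (ideal_codeE s0 hA) (ideal_codeE s0 hB) -lift_ideal_subset /=.
by split=> AB s /(lift_top_block hA)/AB/(lift_top_block hB).
Qed.

Lemma ideal_code_onto s0 k (y : pideal (tower P k)) :
  exists2 C, is_pideal (P := sum_poset) C & ideal_code s0 C = existT (tower P) k.+1 y.
Proof.
have hC := is_pideal_lift (proj2_sig y).
exists (lift_ideal (sval y)) => //; rewrite (ideal_codeE s0 hC).
by apply: sum_le_anti; apply/lift_ideal_subset => s /(lift_top_block hC).
Qed.

Lemma ideal_code_closed s0 (f : tsum -> tsum -> tsum) :
  (forall s t, projT1 (f s t) = projT1 s \/ projT1 (f s t) = projT1 t) ->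
  forall A B, is_pideal (P := sum_poset) A -> is_pideal (P := sum_poset) B ->
  exists2 C, is_pideal (P := sum_poset) C & ideal_code s0 C = f (ideal_code s0 A) (ideal_code s0 B).
Proof.
move=> f_level A B hA hB.
have [k level_k] : exists k, projT1 (f (ideal_code s0 A) (ideal_code s0 B)) = k.+1.
  by case: (f_level (ideal_code s0 A) (ideal_code s0 B)) => ->;
    [rewrite (ideal_codeE s0 hA) | rewrite (ideal_codeE s0 hB)]; eexists.
move: level_k; case: (f _ _) => m y /= em; subst m; exact: ideal_code_onto.
Qed.

End TowerSum.

Definition is_join (P : poset) (j : P -> P -> P) :=
  forall x y z : P, ple (j x y) z <-> ple x z /\ ple y z.
Definition is_meet (P : poset) (m : P -> P -> P) :=
  forall x y z : P, ple z (m x y) <-> ple z x /\ ple z y.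

Section LatticeOps.
Variable P : poset.

Lemma join_ub (j : P -> P -> P) : is_join j -> forall x y : P, ple x (j x y) /\ ple y (j x y).
Proof. by move=> hj x y; apply/hj/ple_refl. Qed.

Lemma meet_lb (m : P -> P -> P) : is_meet m -> forall x y : P, ple (m x y) x /\ ple (m x y) y.
Proof. by move=> hm x y; apply/hm/ple_refl. Qed.

Section IdealJoin.
Variables (j : P -> P -> P) (hj : is_join j).

Lemma is_pideal_join (A B : pideal P) :
  is_pideal (fun x => exists a b, [/\ sval A a, sval B b & ple x (j a b)]).
Proof.
case: A B => [A hA] [B hB] /=; have [[a Aa] _ dirA] := hA; have [[b Bb] _ dirB] := hB; split.
- by exists (j a b), a, b; split=> //; apply: ple_refl.
- by move=> x y xy [a1 [b1 [A1 B1 y1]]]; exists a1, b1; split=> //; apply: ple_trans xy y1.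
- move=> x y [a1 [b1 [A1 B1 x1]]] [a2 [b2 [A2 B2 y2]]].
  have [a3 [A3 a13 a23]] := dirA _ _ A1 A2; have [b3 [B3 b13 b23]] := dirB _ _ B1 B2.
  have [a3j b3j] := join_ub hj a3 b3.
  have j_mono a' b' : ple a' a3 -> ple b' b3 -> ple (j a' b') (j a3 b3).
    by move=> aa bb; apply/hj; split; [apply: ple_trans a3j | apply: ple_trans b3j].
  exists (j a3 b3); split.
  + by exists a3, b3; split=> //; apply: ple_refl.
  + exact: ple_trans x1 (j_mono _ _ a13 b13).
  + exact: ple_trans y2 (j_mono _ _ a23 b23).
Qed.

Definition pideal_join (A B : pideal P) : pideal P := exist _ _ (is_pideal_join A B).

Lemma is_join_pideal_join : is_join (P := ideal_poset P) pideal_join.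
Proof.
move=> [A [[a Aa] _ _]] [B [[b Bb] _ _]] [C [_ downC dirC]] /=; split.
- move=> ABC; split=> [x Ax | y By]; apply: ABC.
  + by exists x, b; split=> //; apply: (join_ub hj x b).1.
  + by exists a, y; split=> //; apply: (join_ub hj a y).2.
- move=> [AC BC] x [a1 [b1 [A1 B1 x1]]].
  have [c [Cc a1c b1c]] := dirC _ _ (AC _ A1) (BC _ B1).
  by apply: downC Cc; apply: ple_trans x1 _; apply/hj.
Qed.

End IdealJoin.

Section IdealMeet.
Variables (m : P -> P -> P) (hm : is_meet m).

Lemma is_pideal_meet (A B : pideal P) : is_pideal (fun x => sval A x /\ sval B x).
Proof.
case: A B => [A hA] [B hB] /=.
have [[a Aa] downA dirA] := hA; have [[b Bb] downB dirB] := hB; split.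
- have [ma mb] := meet_lb hm a b.
  by exists (m a b); split; [apply: downA Aa | apply: downB Bb].
- by move=> x y xy [Ay By]; split; [apply: downA Ay | apply: downB By].
- move=> x y [Ax Bx] [Ay By].
  have [u [Au xu yu]] := dirA _ _ Ax Ay; have [v [Bv xv yv]] := dirB _ _ Bx By.
  have [mu mv] := meet_lb hm u v.
  exists (m u v); split; try exact/hm.
  by split; [apply: downA Au | apply: downB Bv].
Qed.

Definition pideal_meet (A B : pideal P) : pideal P := exist _ _ (is_pideal_meet A B).

Lemma is_meet_pideal_meet : is_meet (P := ideal_poset P) pideal_meet.
Proof.
move=> A B C; split=> [CAB | [CA CB] x Cx]; last by split; [apply: CA | apply: CB].
by split=> x /CAB[].
Qed.

End IdealMeet.
End LatticeOps.

Fixpoint tower_join (P : poset) (j : P -> P -> P) (hj : is_join j) (k : nat) :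
  {j : tower P k -> tower P k -> tower P k | is_join j} :=
  match k with
  | 0 => exist _ j hj
  | k.+1 => exist _ _ (is_join_pideal_join (svalP (tower_join hj k)))
  end.

Fixpoint tower_meet (P : poset) (m : P -> P -> P) (hm : is_meet m) (k : nat) :
  {m : tower P k -> tower P k -> tower P k | is_meet m} :=
  match k with
  | 0 => exist _ m hm
  | k.+1 => exist _ _ (is_meet_pideal_meet (svalP (tower_meet hm k)))
  end.

Section SumOps.
Variables (P : poset) (op : forall k, tower P k -> tower P k -> tower P k).

Definition sum_merge (pick_left : nat -> nat -> bool) (s t : tsum P) : tsum P :=
  match s, t with existT k x, existT k' y =>
    match eq_comparable k k' with
    | left e => existT (tower P) k' (op (eq_rect k (tower P) x k' e) y)
    | right _ => if pick_left k k' then s else t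
    end
  end.

Definition sum_join := sum_merge (fun k k' => k < k')%N.
Definition sum_meet := sum_merge (fun k k' => k' < k)%N.

Lemma sum_merge_same pick k (x y : tower P k) :
  sum_merge pick (existT _ k x) (existT _ k y) = existT _ k (op x y).
Proof.
rewrite /sum_merge; case: eq_comparable => [e|/(_ erefl)[]].
by rewrite (eq_irrelevance e erefl).
Qed.

Lemma sum_merge_diff pick k k' (x : tower P k) (y : tower P k') : k != k' ->
  sum_merge pick (existT _ k x) (existT _ k' y) =
  if pick k k' then existT _ k x else existT _ k' y.
Proof. by move=> ne; rewrite /sum_merge; case: eq_comparable => // e; rewrite e eqxx in ne. Qed.

Lemma level_sum_merge pick s t :
  projT1 (sum_merge pick s t) = projT1 s \/ projT1 (sum_merge pick s t) = projT1 t.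
Proof.
case: s t => [k x] [k' y]; rewrite /sum_merge.
by case: eq_comparable => [e|_]; [right | case: pick; [left | right]].
Qed.

Lemma sum_join_lub : (forall k, is_join (@op k)) ->
  is_join (P := sum_poset P) sum_join.
Proof.
move=> hop s t u; case: s t => [k x] [k' y]; have [e|ne] := eqVneq k k'.
  subst k'; rewrite /sum_join sum_merge_same; case: u => m z.
  change (@ple (sum_poset P)) with (@sum_le P).
  have [e|ne] := eqVneq k m; first by subst m; rewrite !sum_le_same; apply: hop.
  by rewrite !sum_le_diff //; split=> [->|[]].
rewrite /sum_join sum_merge_diff //.
have [lt|ge] := ltnP k k'.
- split=> [xu|[]//]; split=> //; apply: sum_le_trans xu; exact: sum_le_deeper.
- have lt : (k' < k)%N by rewrite ltn_neqAle ge eq_sym ne.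
  split=> [yu|[]//]; split=> //; apply: sum_le_trans yu; exact: sum_le_deeper.
Qed.

Lemma sum_meet_glb : (forall k, is_meet (@op k)) ->
  is_meet (P := sum_poset P) sum_meet.
Proof.
move=> hop s t u; case: s t => [k x] [k' y]; have [e|ne] := eqVneq k k'.
  subst k'; rewrite /sum_meet sum_merge_same; case: u => m z.
  change (@ple (sum_poset P)) with (@sum_le P).
  have [e|ne] := eqVneq m k; first by subst m; rewrite !sum_le_same; apply: hop.
  by rewrite !sum_le_diff //; split=> [->|[]].
rewrite /sum_meet sum_merge_diff //.
have [lt|ge] := ltnP k' k.
- split=> [ux|[]//]; split=> //; apply: sum_le_trans ux _; exact: sum_le_deeper.
- have lt : (k < k')%N by rewrite ltn_neqAle ge ne.
  split=> [uy|[]//]; split=> //; apply: sum_le_trans uy _; exact: sum_le_deeper.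
Qed.

End SumOps.

Definition sum_leb (P : poset) (s t : tsum P) : bool := `[< sum_le s t >].

Section SumOrder.
Variable P : poset.

Lemma sum_lebP (s t : tsum P) : reflect (sum_le s t) (sum_leb s t).
Proof. exact: asboolP. Qed.

Lemma sum_leb_refl : reflexive (@sum_leb P).
Proof. by move=> s; apply/sum_lebP/sum_le_refl. Qed.

Lemma sum_leb_anti : antisymmetric (@sum_leb P).
Proof. by move=> s t /andP[/sum_lebP st /sum_lebP ts]; apply: sum_le_anti. Qed.

Lemma sum_leb_trans : transitive (@sum_leb P).
Proof. by move=> t s u /sum_lebP st /sum_lebP tu; apply/sum_lebP/(sum_le_trans st tu). Qed.

Lemma sum_leb_join (f : tsum P -> tsum P -> tsum P) : is_join (P := sum_poset P) f ->
  forall s t u, sum_leb (f s t) u = sum_leb s u && sum_leb t u.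
Proof.
move=> hf s t u; apply/idP/idP => [/sum_lebP/hf[su tu] | /andP[/sum_lebP su /sum_lebP tu]].
- by apply/andP; split; apply/sum_lebP.
- by apply/sum_lebP/hf.
Qed.

Lemma sum_leb_meet (f : tsum P -> tsum P -> tsum P) : is_meet (P := sum_poset P) f ->
  forall u s t, sum_leb u (f s t) = sum_leb u s && sum_leb u t.
Proof.
move=> hf u s t; apply/idP/idP => [/sum_lebP/hf[us ut] | /andP[/sum_lebP us /sum_lebP ut]].
- by apply/andP; split; apply/sum_lebP.
- by apply/sum_lebP/hf.
Qed.

End SumOrder.

Definition tower_order (P : poset) := tsum P.
HB.instance Definition _ P := gen_eqMixin (tower_order P).
HB.instance Definition _ P := gen_choiceMixin (tower_order P).
HB.instance Definition _ P := Order.Le_isPOrder.Build (Order.Disp tt tt) (tower_order P)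
  (@sum_leb_refl P) (@sum_leb_anti P) (@sum_leb_trans P).

Definition tower_semilattice (P : poset) (j : P -> P -> P) (hj : is_join j) := tower_order P.
HB.instance Definition _ P j hj := Order.POrder.copy (@tower_semilattice P j hj) (tower_order P).
HB.instance Definition _ P j hj := Order.POrder_isJoinSemilattice.Build (Order.Disp tt tt)
  (@tower_semilattice P j hj) (sum_leb_join (sum_join_lub (fun k => svalP (tower_join hj k)))).

Definition tower_lattice (P : poset) (j : P -> P -> P) (hj : is_join j)
  (m : P -> P -> P) (hm : is_meet m) := tower_semilattice hj.
HB.instance Definition _ P j hj m hm :=
  Order.JoinSemilattice.copy (@tower_lattice P j hj m hm) (tower_semilattice hj).
HB.instance Definition _ P j hj m hm := Order.POrder_isMeetSemilattice.Build (Order.Disp tt tt)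
  (@tower_lattice P j hj m hm) (sum_leb_meet (sum_meet_glb (fun k => svalP (tower_meet hm k)))).

Lemma same_set_eq d (T : porderType d) (A B : T -> Prop) : same_set A B -> A = B.
Proof. by move=> AB; apply: funext => x; apply: propext. Qed.

Lemma is_idealE d (T : porderType d) (r : T -> T -> Prop) :
  (forall x y, x <= y <-> r x y) -> forall I : T -> Prop,
  is_ideal I <-> [/\ exists x, I x, forall x y, r x y -> I y -> I x &
                     forall x y, I x -> I y -> exists z, [/\ I z, r x z & r y z]].
Proof.
move=> le_r I; split=> -[neI downI dirI]; split=> // [x y /le_r | x y Ix Iy]; try exact: downI.
- by have [z Iz /andP[/le_r xz /le_r yz]] := dirI _ _ Ix Iy; exists z.
- by have [z [Iz /le_r xz /le_r yz]] := dirI _ _ Ix Iy; exists z; rewrite ?xz ?yz.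
Qed.

Lemma ideal_joinE d (T : porderType d) (A B C : T -> Prop) :
  is_ideal C -> subset A C -> subset B C ->
  (forall D, is_ideal D -> subset A D -> subset B D -> subset C D) ->
  ideal_join A B = C.
Proof.
move=> hC AsubC BsubC C_least; apply: same_set_eq => x; split.
- by apply; [exact: hC | exact: AsubC | exact: BsubC].
- by move=> Cx D hD AsubD BsubD; exact: C_least.
Qed.

Lemma is_ideal_meet d (L : latticeType d) (A B : L -> Prop) :
  is_ideal A -> is_ideal B -> is_ideal (ideal_meet A B).
Proof.
move=> [[a Aa] downA dirA] [[b Bb] downB dirB]; split.
- by exists (a `&` b); split; [apply: downA Aa; apply: leIl | apply: downB Bb; apply: leIr].
- by move=> x y xy [Ay By]; split; [apply: downA Ay | apply: downB By].
- move=> x y [Ax Bx] [Ay By].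
  have [u Au /andP[xu yu]] := dirA _ _ Ax Ay; have [v Bv /andP[xv yv]] := dirB _ _ Bx By.
  exists (u `&` v); last by rewrite !lexI xu xv yu yv.
  by split; [apply: downA Au; apply: leIl | apply: downB Bv; apply: leIr].
Qed.

Lemma ideals_semilattice_embeddingP d (S : joinSemilatticeType d) (g : (S -> Prop) -> S) :
  ideals_poset_embedding g ->
  (forall A B, is_ideal A -> is_ideal B -> exists2 C, is_ideal C & g C = g A `|` g B) ->
  ideals_semilattice_embedding g.
Proof.
move=> g_le g_join; split.
- by move=> A B _ _ /same_set_eq ->.
- move=> A B hA hB gAB.
  have AsubB : subset A B by apply/(g_le _ _ hA hB); rewrite gAB.
  have BsubA : subset B A by apply/(g_le _ _ hB hA); rewrite gAB.
  by move=> x; split; [apply: AsubB | apply: BsubA].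
- move=> A B hA hB; have [C hC gC] := g_join _ _ hA hB.
  rewrite -gC; congr g; apply: ideal_joinE => //.
  + by apply/(g_le _ _ hA hC); rewrite gC leUl.
  + by apply/(g_le _ _ hB hC); rewrite gC leUr.
  + move=> D hD AD BD; apply/(g_le _ _ hC hD).
    by rewrite gC leUx; apply/andP; split; apply/g_le.
Qed.

Lemma ideals_lattice_embeddingP d (L : latticeType d) (g : (L -> Prop) -> L) :
  ideals_poset_embedding g ->
  (forall A B, is_ideal A -> is_ideal B -> exists2 C, is_ideal C & g C = g A `|` g B) ->
  (forall A B, is_ideal A -> is_ideal B -> exists2 C, is_ideal C & g C = g A `&` g B) ->
  ideals_lattice_embedding g.
Proof.
move=> g_le g_join g_meet.
have [g_wd g_inj g_joinE] := ideals_semilattice_embeddingP g_le g_join; split=> //.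
move=> A B hA hB; have hAB := is_ideal_meet hA hB.
have [C hC gC] := g_meet _ _ hA hB.
apply: le_anti; apply/andP; split.
- by rewrite lexI; apply/andP; split; apply/(g_le _ _ hAB) => // x [].
- rewrite -gC; apply/(g_le _ _ hC hAB) => x Cx; split.
  + by move: x Cx; apply/(g_le _ _ hC hA); rewrite gC leIl.
  + by move: x Cx; apply/(g_le _ _ hC hB); rewrite gC leIr.
Qed.

Definition poset_of d (T : porderType d) : poset.
Proof.
refine (@Poset T (fun x y => x <= y) (@lexx _ T) (fun x y z => @le_trans _ T y x z) _).
by move=> x y xy yx; apply/le_anti/andP.
Defined.

Lemma is_join_poset_of d (S : joinSemilatticeType d) : is_join (P := poset_of S) Order.join.
Proof. by move=> x y z /=; rewrite leUx; split=> [/andP | [-> ->]]. Qed.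

Lemma is_meet_poset_of d (L : latticeType d) : is_meet (P := poset_of L) Order.meet.
Proof. by move=> x y z /=; rewrite lexI; split=> [/andP | [-> ->]]. Qed.

Arguments is_join_poset_of {d} S.
Arguments is_meet_poset_of {d} L.

Section TowerEmbeddings.
Variables (P : poset) (x0 : P).
Let s0 : tsum P := existT (tower P) 0 x0.

Lemma is_ideal_tower (I : tower_order P -> Prop) :
  is_ideal I <-> is_pideal (P := sum_poset P) I.
Proof. by apply: is_idealE => x y; split=> /sum_lebP. Qed.

Lemma ideals_poset_embedding_code : ideals_poset_embedding (P := tower_order P) (ideal_code s0).
Proof.
move=> A B /is_ideal_tower hA /is_ideal_tower hB.
by apply: iff_trans (ideal_code_le s0 hA hB); split=> /sum_lebP.
Qed.

Lemma ideal_code_merge (pick : nat -> nat -> bool)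
    (op : forall k, tower P k -> tower P k -> tower P k) (A B : tower_order P -> Prop) :
  is_ideal A -> is_ideal B ->
  exists2 C : tower_order P -> Prop, is_ideal C &
    ideal_code s0 C = sum_merge op pick (ideal_code s0 A) (ideal_code s0 B).
Proof.
move=> /is_ideal_tower hA /is_ideal_tower hB.
have [C hC eC] := ideal_code_closed s0 (level_sum_merge op pick) hA hB.
by exists C => //; apply/is_ideal_tower.
Qed.

End TowerEmbeddings.

Lemma poset_ideal_tower d (X : porderType d) (x0 : X) :
  exists (d' : Order.disp_t) (X' : porderType d'),
    (exists f : X -> X', poset_embedding f) /\
    (exists g : (X' -> Prop) -> X', ideals_poset_embedding g).
Proof.
exists _, (tower_order (poset_of X)); split.
- exists (existT (tower (poset_of X)) 0) => x y.
  by apply/idP/idP => [/sum_lebP/sum_le_same | xy]; last apply/sum_lebP/sum_le_same.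
- exists (ideal_code (existT (tower (poset_of X)) 0 x0)); exact: ideals_poset_embedding_code.
Qed.

Lemma semilattice_ideal_tower d (S : joinSemilatticeType d) (x0 : S) :
  exists (d' : Order.disp_t) (S' : joinSemilatticeType d'),
    (exists f : S -> S', semilattice_embedding f) /\
    (exists g : (S' -> Prop) -> S', ideals_semilattice_embedding g).
Proof.
exists _, (tower_semilattice (is_join_poset_of S)); split.
- exists (existT (tower (poset_of S)) 0); split; first exact: (@level_inj _ 0).
  by move=> x y; symmetry; exact: sum_merge_same.
- exists (ideal_code (existT (tower (poset_of S)) 0 x0)); apply: ideals_semilattice_embeddingP.
  + exact: ideals_poset_embedding_code.
  + exact: ideal_code_merge.
Qed.

Lemma lattice_ideal_tower d (L : latticeType d) (x0 : L) :
  exists (d' : Order.disp_t) (L' : latticeType d'),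
    (exists f : L -> L', lattice_embedding f) /\
    (exists g : (L' -> Prop) -> L', ideals_lattice_embedding g).
Proof.
exists _, (tower_lattice (is_join_poset_of L) (is_meet_poset_of L)); split.
- exists (existT (tower (poset_of L)) 0); split; first exact: (@level_inj _ 0).
  + by move=> x y; symmetry; exact: sum_merge_same.
  + by move=> x y; symmetry; exact: sum_merge_same.
- exists (ideal_code (existT (tower (poset_of L)) 0 x0)); apply: ideals_lattice_embeddingP.
  + exact: ideals_poset_embedding_code.
  + exact: ideal_code_merge.
  + exact: ideal_code_merge.
Qed.

Theorem proposition2p2 :
  (forall (d : Order.disp_t) (L : latticeType d),
     exists (d' : Order.disp_t) (L' : latticeType d'),
       (exists f : L -> L', lattice_embedding f) /\
       (exists g : (L' -> Prop) -> L', ideals_lattice_embedding g)) /\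
  (forall (d : Order.disp_t) (S : joinSemilatticeType d),
     exists (d' : Order.disp_t) (S' : joinSemilatticeType d'),
       (exists f : S -> S', semilattice_embedding f) /\
       (exists g : (S' -> Prop) -> S', ideals_semilattice_embedding g)) /\
  (forall (d : Order.disp_t) (P : porderType d),
     exists (d' : Order.disp_t) (P' : porderType d'),
       (exists f : P -> P', poset_embedding f) /\
       (exists g : (P' -> Prop) -> P', ideals_poset_embedding g)).
Proof.
split; [|split] => d X; have [[x0] | X_empty] := pselect (inhabited X).
- exact: lattice_ideal_tower x0.
- have [d' [L' [_ g_emb]]] := lattice_ideal_tower true.
  exists d', L'; split=> //; exists (fun x => False_rect L' (X_empty (inhabits x))).
  by split=> x; case: (X_empty (inhabits x)).
- exact: semilattice_ideal_tower x0.
- have [d' [S' [_ g_emb]]] := semilattice_ideal_tower true.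
  exists d', S'; split=> //; exists (fun x => False_rect S' (X_empty (inhabits x))).
  by split=> x; case: (X_empty (inhabits x)).
- exact: poset_ideal_tower x0.
- have [d' [P' [_ g_emb]]] := poset_ideal_tower true.
  exists d', P'; split=> //.
  by exists (fun x => False_rect P' (X_empty (inhabits x))) => x; case: (X_empty (inhabits x)).
Qed.
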